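(* Let $A$ be a $3\times 3$ skew-symmetric integer matrix which is mutation-cyclic, and let $g\in\mathbb{Z}^3$ be a nonzero vector with $Ag=0$. Write the output of the algorithm described in the context as $m(A)=S(-a,-b,c)$ and suppose $c>2$. Then the graded cluster algebra $\mathcal{A}((x_1,x_2,x_3),A,g)$ has only finitely many cluster variables of each occurring degree. Moreover, the grading is not balanced.
   Context: Notation: for integers $p,q,r$, $S(p,q,r)$ denotes the skew-symmetric matrix $\begin{pmatrix}0&-p&-r\\ p&0&-q\\ r&q&0\end{pmatrix}$. Matrix mutation: for a $3\times3$ skew-symmetric integer matrix $B=(b_{ij})$ and $k\in\{1,2,3\}$, $\mu_k(B)=(b'_{ij})$ with $b'_{ij}=-b_{ij}$ if $i=k$ or $j=k$, and $b'_{ij}=b_{ij}+\operatorname{sgn}(b_{ik})\max(b_{ik}b_{kj},0)$ otherwise. The mutation class of $B$ is the set of matrices obtained from $B$ by finite sequences of mutations. A $3\times 3$ skew-symmetric matrix is acyclic if its associated quiver (with $b_{ij}$ arrows $i\to j$ when $b_{ij}>0$) has no oriented cycle, equivalently if some column has all its nonzero entries of the same sign; otherwise it is cyclic. $A$ is mutation-cyclic if every matrix in its mutation class is cyclic. Essential equivalence: $B$ and $C$ are essentially equivalent if there is a permutation $\sigma$ of $\{1,2,3\}$ with $C_{ij}=B_{\sigma(i)\sigma(j)}$ for all $i,j$, or $C_{ij}=-B_{\sigma(i)\sigma(j)}$ for all $i,j$ (overall sign is disregarded). The standard form of $B$ is the first matrix in the list $S(-a,-b,c),\,S(-a,b,c),\,S(a,-b,c),\,S(a,b,c)$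 (with $a\ge b\ge c\ge 0$) that is essentially equivalent to $B$. Algorithm defining $m(A)$: replace the input by its standard form and write it $S(-a,-b,c)$ with $|a|\ge|b|\ge|c|\ge 0$; set $A_1$ equal to it. Step 1: if $a\ge b\ge c\ge 2$ and $bc-a\ge b$, the input passes; otherwise, if some column is sign-coherent or $c\le 2$, it fails. Step 2 (for the current $A_i$): if some matrix essentially equivalent to $\mu_3(A_i)$ has the form $S(-d,-e,f)$ with $d\ge e\ge f\ge 2$, let $A_{i+1}$ be such a matrix; otherwise fail. Then: if $f\ge 3$ and $ef-d\ge e$, pass; if $f=2$, pass if $d=e$ and fail if $d>e$; otherwise increase $i$ and repeat Step 2. Output: if the input passed with the most recently computed matrix $S(-d,-e,f)$ (for the pass in Step 1 this is $S(-a,-b,c)$) satisfying $ef-d\ge d$, then $m(A)$ is that matrix; if it passed with $ef-d<d$, then $m(A)$ is $\mu_3$ of that matrix; if it failed, continue computing $A_i$ in the same way until an acyclic $A_k$ is reached and set $m(A)=A_k$. Graded cluster algebras: a seed $((x_1,x_2,x_3),B)$ mutates in direction $k$ to $(x',\mu_k B)$ with $x'_j=x_j$ ($j\ne k$) and $x'_k=\big(\prod_{b_{ik}>0}x_i^{b_{ik}}+\prod_{b_{ik}<0}x_i^{-b_{ik}}\big)/x_k$. Cluster variables are all entries of clusters reachable by iterated mutation, and $\mathcal{A}(x,B,g)$ is the algebra they generate, graded by $\deg x_i=g_i$ where $Bg=0$; under mutation at $k$ the degree vector becomes $g'$ with $g'_j=g_j$ ($j\neq k$) and $g'_k=-g_k+\sum_{b_{ik}>0}b_{ik}g_i$,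 and every cluster variable is homogeneous. A degree occurs if some cluster variable has that degree. The grading is balanced if for every $d$ there is a bijection between the cluster variables of degree $d$ and those of degree $-d$. *)

From HB Require Import structures.
From mathcomp Require Import all_boot all_order all_algebra all_fingroup.
From mathcomp Require Import fraction.
From mathcomp Require Import mpoly.
Set Implicit Arguments. Unset Strict Implicit. Unset Printing Implicit Defensive.
Import Order.TTheory GRing.Theory Num.Theory.
Local Open Scope ring_scope.

Notation mx3 := 'M[int]_3.

Definition skew_symmetric (B : mx3) : Prop := B^T = - B.

Definition S (p q r : int) : mx3 :=
  \matrix_(i < 3, j < 3)
    match nat_of_ord i, nat_of_ord j with
    | 1%N, 0%N => p | 0%N, 1%N => - p
    | 2%N, 0%N => r | 0%N, 2%N => - r
    | 2%N, 1%N => q | 1%N, 2%N => - q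
    | _, _ => 0
    end.

Definition mu (k : 'I_3) (B : mx3) : mx3 :=
  \matrix_(i < 3, j < 3)
    if (i == k) || (j == k) then - B i j
    else B i j + sgz (B i k) * Num.max (B i k * B k j) 0.

Definition mu_seq (s : seq 'I_3) (B : mx3) : mx3 :=
  foldl (fun C k => mu k C) B s.

(* the quiver of B has b_ij arrows i -> j when b_ij > 0; for a 3x3
   skew-symmetric matrix an oriented cycle is a 3-cycle *)
Definition cyclic (B : mx3) : Prop :=
  exists i j k : 'I_3, [/\ 0 < B i j, 0 < B j k & 0 < B k i].
Definition acyclic (B : mx3) : Prop := ~ cyclic B.

Definition mutation_cyclic (A : mx3) : Prop :=
  forall s : seq 'I_3, cyclic (mu_seq s A).

Definition ess_eq (B C : mx3) : Prop :=
  exists s : 'S_3,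
    (forall i j, C i j = B (s i) (s j)) \/ (forall i j, C i j = - B (s i) (s j)).

Definition sign_coherent_col (B : mx3) : Prop :=
  exists j : 'I_3, (forall i, 0 <= B i j) \/ (forall i, B i j <= 0).

Definition std_candidates (a b c : int) : seq mx3 :=
  [:: S (- a) (- b) c; S (- a) b c; S a (- b) c; S a b c].

Definition std_form (B T : mx3) : Prop :=
  exists a b c : int, [/\ a >= b, b >= c & c >= 0] /\
  exists2 n : nat, (n < 4)%N &
    [/\ T = nth 0 (std_candidates a b c) n, ess_eq B T &
        forall m : nat, (m < n)%N -> ~ ess_eq B (nth 0 (std_candidates a b c) m)].

Definition k3 : 'I_3 := @Ordinal 3 2 isT.

Definition pass_output (d e f : int) : mx3 :=
  if d <= e * f - d then S (- d) (- e) f else mu k3 (S (- d) (- e) f).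

Definition good_form (d e f : int) : Prop := [/\ d >= e, e >= f & f >= 2].

(* failing: continue computing A_i (any matrix essentially equivalent
   to mu_3 of the previous one) until an acyclic one is reached *)
Inductive fail_out : mx3 -> mx3 -> Prop :=
  | fo_stop X : acyclic X -> fail_out X X
  | fo_next X Y M : cyclic X -> ess_eq (mu k3 X) Y -> fail_out Y M -> fail_out X M.

(* Step 2, applied to the current A_i; second argument = output m(A) *)
Inductive step2_out : mx3 -> mx3 -> Prop :=
  | s2_pass Ai d e f :
      ess_eq (mu k3 Ai) (S (- d) (- e) f) -> good_form d e f ->
      ((3 <= f /\ e <= e * f - d) \/ (f = 2 /\ d = e)) ->
      step2_out Ai (pass_output d e f)
  | s2_repeat Ai d e f M :
      ess_eq (mu k3 Ai) (S (- d) (- e) f) -> good_form d e f ->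
      3 <= f -> e * f - d < e ->
      step2_out (S (- d) (- e) f) M -> step2_out Ai M
  | s2_fail_f2 Ai d e f M :
      ess_eq (mu k3 Ai) (S (- d) (- e) f) -> good_form d e f ->
      f = 2 -> e < d ->
      fail_out (S (- d) (- e) f) M -> step2_out Ai M
  | s2_fail_noform Ai M :
      ~ (exists d e f, ess_eq (mu k3 Ai) (S (- d) (- e) f) /\ good_form d e f) ->
      fail_out Ai M -> step2_out Ai M.

(* m_out A M : the algorithm on input A terminates with m(A) = M *)
Definition m_out (A M : mx3) : Prop :=
  exists T, std_form A T /\
  exists a b c : int, T = S (- a) (- b) c /\
    let pass1 := good_form a b c /\ b <= b * c - a in
    let fail1 := sign_coherent_col T \/ c <= 2 in
    [\/ pass1 /\ M = pass_output a b c,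
        ~ pass1 /\ fail1 /\ fail_out T M
      | ~ pass1 /\ ~ fail1 /\ step2_out T M].

Definition Frac := {fraction {mpoly rat[3]}}.

Definition xinit (i : 'I_3) : Frac := @FracField.tofrac _ ('X_i : {mpoly rat[3]}).

Record gseed := GSeed { sx : 'I_3 -> Frac; sB : mx3; sg : 'I_3 -> int }.

Definition mut_seed (k : 'I_3) (t : gseed) : gseed :=
  let x := sx t in let B := sB t in let g := sg t in
  GSeed
    (fun j => if j == k then
        (\prod_(i < 3 | 0 < B i k) x i ^+ absz (B i k)
         + \prod_(i < 3 | B i k < 0) x i ^+ absz (B i k)) / x k
      else x j)
    (mu k B)
    (fun j => if j == k then - g k + \sum_(i < 3 | 0 < B i k) B i k * g i
      else g j).

Definition seed_at (A : mx3) (g : 'cV[int]_3) (s : seq 'I_3) : gseed :=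
  foldl (fun t k => mut_seed k t) (GSeed xinit A (fun i => g i 0)) s.

Definition clvar_deg (A : mx3) (g : 'cV[int]_3) (d : int) (f : Frac) : Prop :=
  exists (s : seq 'I_3) (i : 'I_3),
    sx (seed_at A g s) i = f /\ sg (seed_at A g s) i = d.

Definition finitely_many_per_degree (A : mx3) (g : 'cV[int]_3) : Prop :=
  forall d : int, (exists f, clvar_deg A g d f) ->
    exists l : seq Frac, forall f, clvar_deg A g d f -> f \in l.

Definition balanced (A : mx3) (g : 'cV[int]_3) : Prop :=
  forall d : int, exists h : {f : Frac | clvar_deg A g d f} ->
                              {f : Frac | clvar_deg A g (- d) f}, bijective h.

From HB Require Import structures.
From mathcomp Require Import all_boot all_order all_algebra all_fingroup.
From mathcomp Require Import zify ring lra.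
From mathcomp Require Import fraction mpoly.
From Stdlib Require Import FunctionalExtensionality.
Import Order.TTheory GRing.Theory Num.Theory.
Local Open Scope ring_scope.
Set Implicit Arguments. Unset Strict Implicit. Unset Printing Implicit Defensive.

(* Every matrix in the mutation class of a mutation-cyclic A is a cyclic S(p,q,r),
   and mutation acts on its weights (|q|,|r|,|p|) by Vieta jumps x |-> yz - x,
   which preserve the Markov constant x^2 + y^2 + z^2 - xyz.  The algorithm can
   only output m(A) with c > 2 after passing at some S(-d,-e,f) with f >= 3 and
   ef - d >= e, whose Markov constant is <= 0; hence all weights in the class are
   >= 3.  Since g spans the kernel of A, it is proportional to the weights, and so
   is the degree vector of every seed: all degrees have the sign of g, so the
   grading is not balanced.  Along a reduced mutation sequence the weights first
   decrease strictly and then increase strictly, so the length of a sequence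
   reaching a variable of degree d is bounded in terms of d, and there are only
   finitely many such variables. *)

Definition o0 : 'I_3 := @Ordinal 3 0 isT.
Definition o1 : 'I_3 := @Ordinal 3 1 isT.
Definition o2 : 'I_3 := @Ordinal 3 2 isT.

Lemma ord3P (i : 'I_3) : [\/ i = o0, i = o1 | i = o2].
Proof.
by case: i => [[|[|[|m]]] Hm] //; [apply: Or31 | apply: Or32 | apply: Or33]; apply: val_inj.
Qed.

Ltac case_ord3 i := case: (ord3P i) => ->.

Lemma sum_ord3 (F : 'I_3 -> int) : \sum_(i < 3) F i = F o0 + F o1 + F o2.
Proof.
by rewrite !big_ord_recr big_ord0 /= add0r; congr (F _ + F _ + F _); apply: val_inj.
Qed.

Lemma skew_symmetricE (B : mx3) :
  skew_symmetric B -> B = S (B o1 o0) (B o2 o1) (B o2 o0).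
Proof.
move=> skB; have BN i j : B j i = - B i j.
  by have := congr1 (fun M : mx3 => M i j) skB; rewrite !mxE.
apply/matrixP => i j; rewrite mxE.
case_ord3 i; case_ord3 j => /=; rewrite ?(BN o0 o1) ?(BN o1 o2) ?(BN o0 o2) ?opprK //;
  have := BN o0 o0; have := BN o1 o1; have := BN o2 o2; lia.
Qed.

Lemma S_skew_symmetric p q r : skew_symmetric (S p q r).
Proof. by apply/matrixP => i j; rewrite !mxE; case_ord3 i; case_ord3 j => /=; lia. Qed.

Lemma mu0_S p q r : mu o0 (S p q r) = S (- p) (q + sgz r * Num.max (r * - p) 0) (- r).
Proof.
apply/matrixP => i j; rewrite !mxE; case_ord3 i; case_ord3 j; rewrite /= ?mxE /=; try lia.
all: case: (ltrgt0P p) => Hp; case: (ltrgt0P r) => Hr; nia.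
Qed.

Lemma mu1_S p q r : mu o1 (S p q r) = S (- p) (- q) (r + sgz q * Num.max (q * p) 0).
Proof.
apply/matrixP => i j; rewrite !mxE; case_ord3 i; case_ord3 j; rewrite /= ?mxE /=; try lia.
all: case: (ltrgt0P p) => Hp; case: (ltrgt0P q) => Hq; nia.
Qed.

Lemma mu2_S p q r : mu o2 (S p q r) = S (p + sgz (- q) * Num.max (- q * r) 0) (- q) (- r).
Proof.
apply/matrixP => i j; rewrite !mxE; case_ord3 i; case_ord3 j; rewrite /= ?mxE /=; try lia.
all: case: (ltrgt0P q) => Hq; case: (ltrgt0P r) => Hr; nia.
Qed.

Lemma cyclic_S p q r :
  cyclic (S p q r) <-> (p < 0 /\ q < 0 /\ 0 < r) \/ (0 < p /\ 0 < q /\ r < 0).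
Proof.
split.
  case=> i [j [k []]]; case_ord3 i; case_ord3 j; case_ord3 k; rewrite !mxE /=; lia.
case=> [[Hp [Hq Hr]]|[Hp [Hq Hr]]]; [exists o0, o1, o2 | exists o0, o2, o1];
  by rewrite !mxE /=; split; lia.
Qed.

Lemma muK k : involutive (mu k).
Proof.
move=> B; apply/matrixP => i j; rewrite !mxE.
by case: ifP => h; rewrite ?h ?eqxx ?orbT /= ?opprK // sgzN mulrNN; lia.
Qed.

Lemma mu_seq_rcons t k B : mu_seq (rcons t k) B = mu k (mu_seq t B).
Proof. by rewrite /mu_seq foldl_rcons. Qed.

Lemma mu_seq_S A t : skew_symmetric A -> exists p q r, mu_seq t A = S p q r.
Proof.
move=> /skew_symmetricE EA; elim/last_ind: t => [|t k [p [q [r IH]]]].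
  by rewrite /mu_seq /= EA; eauto.
by rewrite mu_seq_rcons IH; case_ord3 k; rewrite ?mu0_S ?mu1_S ?mu2_S; eauto.
Qed.

Lemma mu_seq_skew_symmetric A t : skew_symmetric A -> skew_symmetric (mu_seq t A).
Proof. by move=> skA; have [p [q [r ->]]] := mu_seq_S t skA; apply: S_skew_symmetric. Qed.

(** * Markov triples, Vieta jumps and weights *)

Definition triple := (int * int * int)%type.

Definition tget (w : triple) (k : 'I_3) : int :=
  match nat_of_ord k with 0%N => w.1.1 | 1%N => w.1.2 | _ => w.2 end.

Definition tsum (w : triple) : int := w.1.1 + w.1.2 + w.2.

Definition markov (w : triple) : int :=
  w.1.1 * w.1.1 + w.1.2 * w.1.2 + w.2 * w.2 - w.1.1 * w.1.2 * w.2.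

Definition vieta_jump (k : 'I_3) (w : triple) : triple :=
  match nat_of_ord k with
  | 0%N => (w.1.2 * w.2 - w.1.1, w.1.2, w.2)
  | 1%N => (w.1.1, w.1.1 * w.2 - w.1.2, w.2)
  | _ => (w.1.1, w.1.2, w.1.1 * w.1.2 - w.2)
  end.

Definition vieta_seq (w : triple) (t : seq 'I_3) : triple :=
  foldl (fun w k => vieta_jump k w) w t.

Lemma vieta_jump_other k j w : j != k -> tget (vieta_jump k w) j = tget w j.
Proof. by case: w => [[x y] z]; case_ord3 k; case_ord3 j. Qed.

Lemma tsum_vieta_jump k w :
  tsum (vieta_jump k w) = tsum w - tget w k + tget (vieta_jump k w) k.
Proof. by case: w => [[x y] z]; case_ord3 k; rewrite /tsum /tget /vieta_jump /=; ring. Qed.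

Lemma markov_vieta_jump k w : markov (vieta_jump k w) = markov w.
Proof. by case: w => [[x y] z]; case_ord3 k; rewrite /markov /vieta_jump /=; ring. Qed.

Lemma markov_vieta_seq w t : markov (vieta_seq w t) = markov w.
Proof. by elim: t w => [|k t IH] w //=; rewrite IH markov_vieta_jump. Qed.

Lemma vieta_seq_rcons w t k : vieta_seq w (rcons t k) = vieta_jump k (vieta_seq w t).
Proof. by rewrite /vieta_seq foldl_rcons. Qed.

Lemma vieta_seq_cat w u v : vieta_seq w (u ++ v) = vieta_seq (vieta_seq w u) v.
Proof. exact: foldl_cat. Qed.

Lemma vieta_seq_notin w t i : i \notin t -> tget (vieta_seq w t) i = tget w i.
Proof.
elim: t w => [|k t IH] w //=; rewrite in_cons negb_or => /andP [ik it].
by rewrite IH // vieta_jump_other.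
Qed.

Lemma markov_le0_ge3 (x y z : int) : 0 < x -> 0 < y -> 0 < z ->
  markov (x, y, z) <= 0 -> 3 <= x.
Proof.
rewrite /markov /= => x0 y0 z0 Hm; rewrite leNgt; apply/negP => x3.
have yz0 : 0 < y * z by apply: mulr_gt0.
have sq : 0 <= (y - z) * (y - z) by rewrite -expr2 sqr_ge0.
have [] : x = 1 \/ x = 2 by lia.
all: by move=> Ex; subst x; nia.
Qed.

Definition weights (B : mx3) : triple := (`|B o1 o2|, `|B o0 o2|, `|B o0 o1|).

Lemma weights_S p q r : weights (S p q r) = (`|q|, `|r|, `|p|).
Proof. by rewrite /weights !mxE /= !normrN. Qed.

Lemma weights_mu_cyclic k p q r : cyclic (S p q r) -> cyclic (mu k (S p q r)) ->
  weights (mu k (S p q r)) = vieta_jump k (weights (S p q r)).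
Proof.
by case_ord3 k; rewrite ?mu0_S ?mu1_S ?mu2_S !cyclic_S !weights_S /vieta_jump /= => C1 C2;
  congr (_, _, _); nia.
Qed.

Section MutationCyclic.

Variable A : mx3.
Hypotheses (skA : skew_symmetric A) (cycA : mutation_cyclic A).

Lemma weights_mu_seq t : weights (mu_seq t A) = vieta_seq (weights A) t.
Proof.
elim/last_ind: t => [|t k IH] //.
rewrite vieta_seq_rcons -IH mu_seq_rcons.
have := cycA (rcons t k); rewrite mu_seq_rcons.
by have := cycA t; have [p [q [r ->]]] := mu_seq_S t skA; apply: weights_mu_cyclic.
Qed.

Lemma markov_mu_seq t : markov (weights (mu_seq t A)) = markov (weights A).
Proof. by rewrite weights_mu_seq markov_vieta_seq. Qed.

Lemma weights_mu_seq_gt0 t i : 0 < tget (weights (mu_seq t A)) i.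
Proof.
have := cycA t; have [p [q [r ->]]] := mu_seq_S t skA.
by rewrite cyclic_S weights_S /tget; case_ord3 i => /=; lia.
Qed.

Lemma weights_ge3 t i : markov (weights A) <= 0 -> 3 <= tget (weights (mu_seq t A)) i.
Proof.
rewrite -(markov_mu_seq t).
have := weights_mu_seq_gt0 t o0; have := weights_mu_seq_gt0 t o1.
have := weights_mu_seq_gt0 t o2.
case: (weights _) => [[x y] z]; rewrite /tget /markov /= => z0 y0 x0 Hm.
case_ord3 i => /=; [apply: (markov_le0_ge3 x0 y0 z0) | apply: (markov_le0_ge3 y0 x0 z0)
                   | apply: (markov_le0_ge3 z0 x0 y0)]; rewrite /markov /=; nia.
Qed.

End MutationCyclic.

Lemma ess_eq_trans B C D : ess_eq B C -> ess_eq C D -> ess_eq B D.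
Proof.
case=> s1 H1 [s2 H2]; exists (s2 * s1)%g.
by case: H1 => H1; case: H2 => H2; [left|right|right|left] => i j;
  rewrite H2 H1 !permM ?opprK.
Qed.

Lemma ess_eq_mu B C k : ess_eq B C -> exists k', ess_eq (mu k' B) (mu k C).
Proof.
case=> s H; exists (s k), s.
have Es i : (s i == s k) = (i == k) by rewrite (inj_eq perm_inj).
by case: H => H; [left|right] => i j; rewrite !mxE !Es !H; case: ifP => _ //;
  rewrite ?sgzN; nia.
Qed.

Lemma ess_eq_cyclic B C : skew_symmetric B -> cyclic B -> ess_eq B C -> cyclic C.
Proof.
move=> /skew_symmetricE EB [i [j [k [Hij Hjk Hki]]]] [s [H|H]].
  by exists (s^-1 i)%g, (s^-1 j)%g, (s^-1 k)%g; rewrite !H !permKV.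
exists (s^-1 i)%g, (s^-1 k)%g, (s^-1 j)%g; rewrite !H !permKV.
rewrite EB in Hij Hjk Hki *; move: Hij Hjk Hki.
by case_ord3 i; case_ord3 j; case_ord3 k; rewrite !mxE /=; split; lia.
Qed.

Lemma ess_eq_markov B C : skew_symmetric B -> ess_eq B C ->
  markov (weights C) = markov (weights B).
Proof.
move=> /skew_symmetricE EB [s H].
have -> : weights C = (`|B (s o1) (s o2)|, `|B (s o0) (s o2)|, `|B (s o0) (s o1)|).
  by case: H => H; rewrite /weights !H ?normrN.
have d01 : s o0 != s o1 by rewrite (inj_eq perm_inj).
have d02 : s o0 != s o2 by rewrite (inj_eq perm_inj).
have d12 : s o1 != s o2 by rewrite (inj_eq perm_inj).
move: d01 d02 d12; rewrite EB.
by case_ord3 (s o0); case_ord3 (s o1); case_ord3 (s o2) => //= _ _ _;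
  rewrite /weights !mxE /markov /= ?normrN; ring.
Qed.

Section MutationClass.

Variable A : mx3.
Hypotheses (skA : skew_symmetric A) (cycA : mutation_cyclic A).

Definition in_class (X : mx3) := exists t, ess_eq (mu_seq t A) X.

Lemma in_class_cyclic X : in_class X -> cyclic X.
Proof.
by case=> t; apply: ess_eq_cyclic; [apply: mu_seq_skew_symmetric | apply: cycA].
Qed.

Lemma in_class_mu3 X Y : in_class X -> ess_eq (mu k3 X) Y -> in_class Y.
Proof.
case=> t tX XY; have [k tkX] := ess_eq_mu k3 tX.
by exists (rcons t k); rewrite mu_seq_rcons; apply: ess_eq_trans tkX XY.
Qed.

Lemma in_class_markov X : in_class X -> markov (weights X) = markov (weights A).
Proof.
case=> t tX; rewrite (ess_eq_markov (mu_seq_skew_symmetric t skA) tX).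
exact: markov_mu_seq.
Qed.

Lemma fail_out_notin_class X M : fail_out X M -> ~ in_class X.
Proof.
elim=> [Y acY | Y Z N _ YZ _ IH] YA; first exact/acY/in_class_cyclic.
exact/IH/(in_class_mu3 YA YZ).
Qed.

Lemma markov_pass d e f : 3 <= f -> e <= d -> f <= e -> e <= e * f - d ->
  markov (weights (S (- d) (- e) f)) <= 0.
Proof.
(* markov = (d - e)(d - ef + e) + e^2 (2 - f) + f^2 *)
move=> f3 ed fe Hpass; rewrite weights_S /markov /= !normrN !ger0_norm; try lia.
have h1 : (d - e) * (d - e * f + e) <= 0 by apply: mulr_ge0_le0; lia.
have h2 : e * e * (2 - f) <= - (e * e) by nia.
nia.
Qed.

Lemma pass_output_f d e f a b c : 2 <= f -> 2 < c ->
  pass_output d e f = S (- a) (- b) c \/ pass_output d e f = - S (- a) (- b) c ->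
  f = c.
Proof.
by move=> f2 c2 [] /(congr1 (fun X : mx3 => X o2 o0)); rewrite /pass_output;
  case: ifP => _; rewrite ?mu2_S !mxE /=; lia.
Qed.

Variables (a b c : int).
Hypothesis c_gt2 : 2 < c.

Lemma step2_out_markov Ai M : step2_out Ai M -> in_class Ai ->
  (M = S (- a) (- b) c \/ M = - S (- a) (- b) c) -> markov (weights A) <= 0.
Proof.
elim=> {Ai M}.
- move=> Ai d e f Ai_def [ed fe f2] Hpass AiA HM.
  have fc := pass_output_f f2 c_gt2 HM.
  rewrite -(in_class_markov (in_class_mu3 AiA Ai_def)).
  case: Hpass => [[f3 Hpass] | [f2' _]]; last lia.
  by apply: markov_pass; lia.
- by move=> Ai d e f M Ai_def _ _ _ _ IH AiA; apply: IH (in_class_mu3 AiA Ai_def).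
- move=> Ai d e f M Ai_def _ _ _ Hfail AiA.
  by case: (fail_out_notin_class Hfail (in_class_mu3 AiA Ai_def)).
- by move=> Ai M _ Hfail AiA; case: (fail_out_notin_class Hfail AiA).
Qed.

Lemma m_out_markov M : m_out A M ->
  (M = S (- a) (- b) c \/ M = - S (- a) (- b) c) -> markov (weights A) <= 0.
Proof.
case=> T [[a0 [b0 [c0 [_ [n _ [_ AT _]]]]]] [d [e [f [ET Hout]]]]] HM.
have TA : in_class T by exists [::].
subst T.
case: Hout => [[[[ed fe f2] Hpass] HM'] | [_ [_ Hfail]] | [_ [_ Hstep]]].
- rewrite HM' in HM; have fc := pass_output_f f2 c_gt2 HM.
  by rewrite -(in_class_markov TA); apply: markov_pass; lia.
- by case: (fail_out_notin_class Hfail TA).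
- exact: step2_out_markov Hstep TA HM.
Qed.

End MutationClass.

Lemma seed_at_rcons A g s k : seed_at A g (rcons s k) = mut_seed k (seed_at A g s).
Proof. by rewrite /seed_at foldl_rcons. Qed.

Lemma sB_seed_at A g s : sB (seed_at A g s) = mu_seq s A.
Proof. by elim/last_ind: s => [|s k IH] //; rewrite seed_at_rcons mu_seq_rcons /= IH. Qed.

Lemma degree_mut_vieta (gs : 'I_3 -> int) (W G p q r : int) k : cyclic (S p q r) ->
  (forall i, gs i * W = tget (weights (S p q r)) i * G) ->
  (- gs k + \sum_(i < 3 | 0 < S p q r i k) S p q r i k * gs i) * W
    = tget (vieta_jump k (weights (S p q r))) k * G.
Proof.
rewrite cyclic_S weights_S => Cpqr Hgs.
rewrite big_mkcond sum_ord3 !mxE; case_ord3 k; rewrite /= ?ltxx;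
  by repeat case: ifP => ?; rewrite ?add0r ?addr0 !mulrDl ?mulNr -?mulrA ?Hgs /tget /=; nia.
Qed.

Section Degrees.

Variables (A : mx3) (g : 'cV[int]_3).
Hypotheses (skA : skew_symmetric A) (cycA : mutation_cyclic A) (Ag0 : A *m g = 0).

(* The kernel of a cyclic S(p,q,r) is spanned by its weight vector, and mutation
   acts on both degrees and weights by the same Vieta jump. *)
Lemma degree_weight_proportional s i :
  sg (seed_at A g s) i * tget (weights A) o0 = tget (weights (mu_seq s A)) i * g o0 0.
Proof.
elim/last_ind: s i => [|s k IH] i.
  have Ag0j j : (A *m g) j 0 = 0 by rewrite Ag0 mxE.
  have := Ag0j o0; have := Ag0j o1; have := Ag0j o2.
  have := cycA [::]; rewrite /mu_seq /= !mxE !sum_ord3 (skew_symmetricE skA) !mxE /=.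
  by rewrite cyclic_S weights_S /tget; case_ord3 i => /=; nia.
rewrite seed_at_rcons /= weights_mu_seq // vieta_seq_rcons -weights_mu_seq //.
case: eqP => [->|/eqP ik]; last by rewrite vieta_jump_other // IH.
rewrite sB_seed_at; have := cycA s; have [p [q [r E]]] := mu_seq_S s skA.
by rewrite E => Cpqr; apply: degree_mut_vieta Cpqr _ => j; rewrite -E; apply: IH.
Qed.

End Degrees.

(** * Positivity and the involutivity of mutation *)

(* Cluster variables are subtraction-free, hence of this form; this is what keeps
   the exchange binomials and the variables away from 0. *)
Definition pos_frac (f : Frac) := exists p q : {mpoly rat[3]},
  [/\ 0 < p.@[fun=> 1], 0 < q.@[fun=> 1]
    & f = FracField.tofrac p / FracField.tofrac q].

Lemma tofrac_pos_neq0 (p : {mpoly rat[3]}) : 0 < p.@[fun=> 1] -> FracField.tofrac p != 0.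
Proof. by move=> p1; rewrite tofrac_eq0; apply: contraTneq p1 => ->; rewrite meval0 ltxx. Qed.

Lemma pos_frac_neq0 f : pos_frac f -> f != 0.
Proof. by case=> p [q [p1 q1 ->]]; rewrite mulf_neq0 ?invr_eq0 ?tofrac_pos_neq0. Qed.

Lemma pos_frac1 : pos_frac 1.
Proof. by exists 1, 1; rewrite meval1 ltr01 rmorph1 divr1. Qed.

Lemma pos_fracM f1 f2 : pos_frac f1 -> pos_frac f2 -> pos_frac (f1 * f2).
Proof.
case=> p1 [q1 [a1 b1 ->]] [p2 [q2 [a2 b2 ->]]]; exists (p1 * p2), (q1 * q2).
by rewrite !mevalM !mulr_gt0 // !rmorphM invfM mulrACA.
Qed.

Lemma pos_fracD f1 f2 : pos_frac f1 -> pos_frac f2 -> pos_frac (f1 + f2).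
Proof.
case=> p1 [q1 [a1 b1 ->]] [p2 [q2 [a2 b2 ->]]]; exists (p1 * q2 + p2 * q1), (q1 * q2).
rewrite mevalD !mevalM addr_gt0 ?mulr_gt0 // rmorphD !rmorphM.
by rewrite addf_div ?tofrac_pos_neq0 // [_ * FracField.tofrac p2]mulrC.
Qed.

Lemma pos_fracV f : pos_frac f -> pos_frac f^-1.
Proof. by case=> p [q [a b ->]]; exists q, p; rewrite invfM invrK mulrC. Qed.

Lemma pos_fracX f n : pos_frac f -> pos_frac (f ^+ n).
Proof.
by move=> f_pos; elim: n => [|n IH]; rewrite ?expr0 ?exprS; [apply: pos_frac1 | apply: pos_fracM].
Qed.

Lemma pos_frac_prod (P : pred 'I_3) (F : 'I_3 -> Frac) :
  (forall i, pos_frac (F i)) -> pos_frac (\prod_(i < 3 | P i) F i).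
Proof. by move=> F_pos; apply: big_ind => //; [apply: pos_frac1 | apply: pos_fracM]. Qed.

Lemma pos_frac_exchange (x : 'I_3 -> Frac) (B : mx3) k :
  (forall i, pos_frac (x i)) ->
  pos_frac (\prod_(i < 3 | 0 < B i k) x i ^+ `|B i k| + \prod_(i < 3 | B i k < 0) x i ^+ `|B i k|).
Proof. by move=> x_pos; apply: pos_fracD; apply: pos_frac_prod => i; apply: pos_fracX. Qed.

Lemma pos_frac_seed_at A g s i : pos_frac (sx (seed_at A g s) i).
Proof.
elim/last_ind: s i => [|s k IH] i.
  by exists 'X_i, 1; rewrite meval1 mevalXU ltr01 rmorph1 divr1.
rewrite seed_at_rcons /=; case: ifP => _ //.
by apply: pos_fracM; [apply: pos_frac_exchange | apply: pos_fracV].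
Qed.

Definition same_cluster (t1 t2 : gseed) := sx t1 = sx t2 /\ sB t1 = sB t2.

Lemma same_cluster_trans t1 t2 t3 :
  same_cluster t1 t2 -> same_cluster t2 t3 -> same_cluster t1 t3.
Proof. by case=> E1 E2 [E3 E4]; rewrite /same_cluster E1 E2 E3 E4. Qed.

Lemma same_cluster_mut k t1 t2 :
  same_cluster t1 t2 -> same_cluster (mut_seed k t1) (mut_seed k t2).
Proof. by case: t1 t2 => [x1 B1 g1] [x2 B2 g2] [/= -> ->]. Qed.

Lemma mut_seedK k t : skew_symmetric (sB t) -> (forall i, pos_frac (sx t i)) ->
  same_cluster (mut_seed k (mut_seed k t)) t.
Proof.
case: t => x B gs /= skB x_pos; split => /=; last exact: muK.
have Bkk : B k k = 0.
  by have := congr1 (fun M : mx3 => M k k) skB; rewrite !mxE; move: (B k k) => y; lia.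
apply: functional_extensionality => j; case: eqP => [->|] //; rewrite eqxx.
set P := \prod_(i < 3 | 0 < B i k) x i ^+ `|B i k|.
set Q := \prod_(i < 3 | B i k < 0) x i ^+ `|B i k|.
have muBk i : mu k B i k = - B i k by rewrite mxE eqxx orbT.
have EP : \prod_(i < 3 | 0 < mu k B i k)
    (if i == k then (P + Q) / x k else x i) ^+ `|mu k B i k| = Q.
  apply: eq_big => [i|i]; rewrite muBk ?oppr_gt0 // abszN.
  by case: eqP => [->|//]; rewrite Bkk ltxx.
have EQ : \prod_(i < 3 | mu k B i k < 0)
    (if i == k then (P + Q) / x k else x i) ^+ `|mu k B i k| = P.
  apply: eq_big => [i|i]; rewrite muBk ?oppr_lt0 // abszN.
  by case: eqP => [->|//]; rewrite Bkk ltxx.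
have PQ0 : P + Q != 0 by apply/pos_frac_neq0/pos_frac_exchange.
have xk0 : x k != 0 by apply: pos_frac_neq0.
by rewrite EP EQ addrC invfM invrK mulrA divff // mul1r.
Qed.

(** * Reduced mutation sequences *)

(* [reduce_word s] is [s] with adjacent repetitions cancelled, stored in reverse
   order: its head is the last mutation. *)
Definition reduce_step (r : seq 'I_3) (k : 'I_3) :=
  if r is k' :: r' then (if k' == k then r' else k :: r) else [:: k].
Definition reduce_word (s : seq 'I_3) := foldl reduce_step [::] s.

Definition reduced (r : seq 'I_3) := sorted (fun k k' : 'I_3 => k != k') r.

Lemma reduced_reduce_word s : reduced (reduce_word s).
Proof.
elim/last_ind: s => [|s k IH] //; rewrite /reduce_word foldl_rcons -/(reduce_word s).
case: (reduce_word s) IH => [|k' r] //= IH; case: eqP => [_|/eqP k'k].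
  exact: path_sorted IH.
by rewrite /reduced /= eq_sym k'k.
Qed.

Lemma same_cluster_reduce_word A g s : skew_symmetric A ->
  same_cluster (seed_at A g s) (seed_at A g (rev (reduce_word s))).
Proof.
move=> skA; elim/last_ind: s => [|s k IH]; first by [].
rewrite /reduce_word foldl_rcons -/(reduce_word s) seed_at_rcons.
case: (reduce_word s) IH => [|k' r] /= IH; first exact: same_cluster_mut.
case: eqP => [<-|_]; last by rewrite rev_cons seed_at_rcons; apply: same_cluster_mut.
rewrite rev_cons seed_at_rcons in IH.
apply: same_cluster_trans (same_cluster_mut k' IH) _; apply: mut_seedK.
  by rewrite sB_seed_at; apply: mu_seq_skew_symmetric.
exact: pos_frac_seed_at.
Qed.

Lemma reduced_last_occurrence r i : reduced r -> i \in r ->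
  exists u v, [/\ r = u ++ i :: v, i \notin u & reduced (i :: v)].
Proof.
elim: r => [|k r IH] //= red_kr; rewrite in_cons; case: eqP => [->|ik] /= ir.
  by exists [::], r.
have [u [v [-> iu red_iv]]] := IH (path_sorted red_kr) ir.
by exists (k :: u), v; rewrite in_cons negb_or iu andbT; split=> //; apply/eqP.
Qed.

Lemma sx_seed_at_cat_notin A g u v i : i \notin v ->
  sx (seed_at A g (u ++ v)) i = sx (seed_at A g u) i.
Proof.
elim/last_ind: v => [|v k IH]; first by rewrite cats0.
rewrite mem_rcons in_cons negb_or => /andP [ik iv].
by rewrite -rcons_cat seed_at_rcons /= (negbTE ik) IH.
Qed.

Section ReducedLength.

Variable w0 : triple.
Hypothesis w0_ge3 : forall t j, 3 <= tget (vieta_seq w0 t) j.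

Lemma tsum_vieta_seq_ge0 t : 0 <= tsum (vieta_seq w0 t).
Proof.
by have := w0_ge3 t o0; have := w0_ge3 t o1; have := w0_ge3 t o2; rewrite /tget /tsum /=; lia.
Qed.

Lemma vieta_jump_increasing k k' w : k != k' ->
  (forall j, 3 <= tget w j) -> (forall j, 3 <= tget (vieta_jump k' w) j) ->
  tget w k' <= tget (vieta_jump k' w) k' ->
  tget (vieta_jump k' w) k' < tget (vieta_jump k (vieta_jump k' w)) k /\
  tget (vieta_jump k' w) k < tget (vieta_jump k (vieta_jump k' w)) k.
Proof.
case: w => [[x y] z] kk' w3 w'3.
have := w3 o0; have := w3 o1; have := w3 o2.
have := w'3 o0; have := w'3 o1; have := w'3 o2.
by move: kk'; case_ord3 k; case_ord3 k' => //=; rewrite /tget /vieta_jump /= => *; split; nia.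
Qed.

Let wt r := vieta_seq w0 (rev r).

Lemma wt_cons k r : wt (k :: r) = vieta_jump k (wt r).
Proof. by rewrite /wt rev_cons vieta_seq_rcons. Qed.

(* A reduced sequence first strictly decreases the weights, each step lowering
   their sum, and then strictly increases them. *)
Lemma reduced_length_split k r : reduced (k :: r) ->
  (tget (wt (k :: r)) k < tget (wt r) k -> tsum (wt (k :: r)) + (size r).+1%:Z <= tsum w0) /\
  (tget (wt r) k <= tget (wt (k :: r)) k -> (size r).+1%:Z <= tsum w0 + tget (wt (k :: r)) k + 1).
Proof.
elim: r k => [|k' r IH] k red_kr.
  rewrite wt_cons tsum_vieta_jump; have := w0_ge3 [:: k] k; have := tsum_vieta_seq_ge0 [::].
  by rewrite /wt /=; split => ?; lia.
have kk' : k != k' by move: red_kr; rewrite /reduced /= => /andP [].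
have [IHdown IHup] := IH k' (path_sorted red_kr).
have := tsum_vieta_seq_ge0 (rev (k' :: r)); rewrite -/(wt (k' :: r)) => sum_ge0.
rewrite !wt_cons in IHdown IHup sum_ge0 *; rewrite [tsum (vieta_jump k _)]tsum_vieta_jump /=.
have w3 j : 3 <= tget (wt r) j by apply: w0_ge3.
have w'3 j : 3 <= tget (vieta_jump k' (wt r)) j by rewrite -wt_cons; apply: w0_ge3.
have := w0_ge3 (rev (k :: k' :: r)) k; rewrite -/(wt _) !wt_cons => w''3.
case: (ltP (tget (vieta_jump k' (wt r)) k') (tget (wt r) k')) => [down|up].
  by have := IHdown down; split => ?; lia.
have [inc1 inc2] := vieta_jump_increasing kk' w3 w'3 up.
by have := IHup up; split => ?; lia.
Qed.

Lemma reduced_length_le k r : reduced (k :: r) ->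
  (size (k :: r))%:Z <= tsum w0 + tget (wt (k :: r)) k + 1.
Proof.
move=> red_kr /=; have [down up] := reduced_length_split red_kr.
have := tsum_vieta_seq_ge0 (rev (k :: r)); have := w0_ge3 (rev (k :: r)) k.
rewrite -/(wt _); case: (ltP (tget (wt (k :: r)) k) (tget (wt r) k)) => [/down|/up]; lia.
Qed.

End ReducedLength.

Fixpoint words_upto (n : nat) : seq (seq 'I_3) :=
  if n is n'.+1 then [::] :: [seq k :: w | k <- enum 'I_3, w <- words_upto n']
  else [:: [::]].

Lemma mem_words_upto n w : (size w <= n)%N -> w \in words_upto n.
Proof.
elim: n w => [|n IH] [|k w] // w_le; rewrite /= ?inE ?eqxx //.
by apply/orP; right; apply: allpairs_f; rewrite ?mem_enum ?IH.
Qed.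

Section Grading.

Variables (A : mx3) (g : 'cV[int]_3).
Hypotheses (skA : skew_symmetric A) (cycA : mutation_cyclic A).
Hypotheses (g_neq0 : g != 0) (Ag0 : A *m g = 0) (markovA : markov (weights A) <= 0).

Let W := tget (weights A) o0.
Let G := g o0 0.

Lemma W_gt0 : 0 < W.
Proof. exact: weights_mu_seq_gt0 skA cycA [::] o0. Qed.

Lemma G_neq0 : G != 0.
Proof.
apply: contraNneq g_neq0 => G0; apply/eqP/matrixP => i j; rewrite (ord1 j) mxE.
have := degree_weight_proportional skA cycA Ag0 [::] i; rewrite -/W -/G G0 mulr0 /= => /eqP.
by rewrite mulf_eq0 (gt_eqF W_gt0) orbF => /eqP.
Qed.

Lemma degree_sign s i : 0 < sg (seed_at A g s) i * G.
Proof.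
have := degree_weight_proportional skA cycA Ag0 s i; rewrite -/W -/G.
have := weights_mu_seq_gt0 skA cycA s i; have := W_gt0; have := G_neq0; nia.
Qed.

Lemma weight_le_degree s i :
  tget (weights (mu_seq s A)) i <= sg (seed_at A g s) i * G * W.
Proof.
have := degree_weight_proportional skA cycA Ag0 s i; rewrite -/W -/G.
have := weights_mu_seq_gt0 skA cycA s i; have := W_gt0; have := G_neq0; nia.
Qed.

Lemma cluster_variable_short_word s i : exists2 w,
  (size w)%:Z <= tsum (weights A) + tget (weights (mu_seq s A)) i + 1 &
  sx (seed_at A g s) i = sx (seed_at A g w) i.
Proof.
have w_gt0 t j := weights_mu_seq_gt0 skA cycA t j.
have sum_ge0 : 0 <= tsum (weights A).
  have := w_gt0 [::] o0; have := w_gt0 [::] o1; have := w_gt0 [::] o2.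
  by rewrite /tsum /tget /=; lia.
have [Ex EB] := same_cluster_reduce_word g s skA.
have Emu : mu_seq s A = mu_seq (rev (reduce_word s)) A by rewrite -!(sB_seed_at A g) EB.
rewrite Ex Emu; case: (boolP (i \in reduce_word s)) => [ir|inr]; last first.
  exists [::]; first by have := w_gt0 (rev (reduce_word s)) i; rewrite /=; lia.
  by rewrite -[rev _]cat0s sx_seed_at_cat_notin ?mem_rev.
have [u [v [Er iu red_iv]]] := reduced_last_occurrence (reduced_reduce_word s) ir.
have Erev : rev (reduce_word s) = rev (i :: v) ++ rev u by rewrite Er rev_cat.
exists (rev (i :: v)); last by rewrite Erev sx_seed_at_cat_notin ?mem_rev.
have w0_ge3 t j : 3 <= tget (vieta_seq (weights A) t) j.
  by rewrite -weights_mu_seq //; apply: weights_ge3.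
rewrite Erev weights_mu_seq // vieta_seq_cat vieta_seq_notin ?mem_rev // size_rev.
by have := reduced_length_le w0_ge3 red_iv.
Qed.

Lemma finitely_many_per_degree_of_markov : finitely_many_per_degree A g.
Proof.
move=> d _; pose N := absz (tsum (weights A) + d * G * W + 1).
exists [seq sx (seed_at A g ij.1) ij.2 | ij <- [seq (w, j) | w <- words_upto N, j <- enum 'I_3]].
move=> _ [s [i [<- Hd]]]; have [w w_le ->] := cluster_variable_short_word s i.
apply/mapP; exists (w, i) => //; apply: allpairs_f; rewrite ?mem_enum // mem_words_upto //.
by have := weight_le_degree s i; rewrite Hd /N; move: (size w) w_le => n; lia.
Qed.

Lemma not_balanced_of_markov : ~ balanced A g.
Proof.
move=> /(_ G) [h _].
have x0 : clvar_deg A g G (xinit o0) by exists [::], o0.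
have [_ [s [i [_ Hd]]]] := h (exist _ _ x0).
by have := degree_sign s i; rewrite Hd; nia.
Qed.

End Grading.

Theorem mainTheorem1 (A : 'M[int]_3) (g : 'cV[int]_3) (M : 'M[int]_3)
    (a b c : int) :
  skew_symmetric A -> mutation_cyclic A ->
  g != 0 -> A *m g = 0 ->
  m_out A M -> (M = S (- a) (- b) c \/ M = - S (- a) (- b) c) ->
  2 < c ->
  finitely_many_per_degree A g /\ ~ balanced A g.
Proof.
move=> skA cycA g_neq0 Ag0 mA HM c_gt2.
have markovA := m_out_markov skA cycA c_gt2 mA HM.
split; [exact: finitely_many_per_degree_of_markov | exact: not_balanced_of_markov].
Qed.
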